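(* Let $\mathcal C$ be an epireflective subcategory of $\mathbf{Top}$ that is closed under finer topologies. If $\{X_i\}$ is a family of semitopological Mal'tsev spaces, then $\mathrm{r}_{\mathcal C}$ preserves the product of $\{X_i\}$, i.e., the canonical map $\mu_{\mathcal C}\colon\mathrm{r}_{\mathcal C}\prod X_i\to\prod\mathrm{r}_{\mathcal C}X_i$ is a homeomorphism.
   Context: An epireflective subcategory $\mathcal C$ of $\mathbf{Top}$ is a full, isomorphism-closed subcategory closed under products and subspaces; each space $X$ has a reflection $\mathrm{r}_{\mathcal C}X\in\mathcal C$ with a continuous surjection $\mathrm{r}_{(X,\mathcal C)}$ through which every continuous map from $X$ into a space of $\mathcal C$ factors uniquely. $\mathcal C$ is closed under finer topologies if $(X,\tau)\in\mathcal C$ and $\rho\supseteq\tau$ a topology on $X$ imply $(X,\rho)\in\mathcal C$. The map $\mu_{\mathcal C}$ is the unique continuous map with $\pi_j\circ\mu_{\mathcal C}=\mathrm{r}_{\mathcal C}(\pi_{X_j})$ for every $j$. A Mal'tsev operation on $X$ is a map $\Phi\colon X^3\to X$ with $\Phi(x,x,y)=\Phi(y,x,x)=y$ for all $x,y$; a semitopological Mal'tsev space is a space admitting a separately continuous Mal'tsev operation. *)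

From Stdlib Require Import List.
Import ListNotations.

Set Implicit Arguments.

Definition is_topology (T : Type) (o : (T -> Prop) -> Prop) : Prop :=
  o (fun _ => True) /\
  (forall U V, o U -> o V -> o (fun x => U x /\ V x)) /\
  (forall F : (T -> Prop) -> Prop, (forall U, F U -> o U) ->
     o (fun x => exists U, F U /\ U x)).

Record space := Space {
  pt :> Type;
  opn : (pt -> Prop) -> Prop;
  opn_top : is_topology opn }.

Definition continuous {X Y : space} (f : X -> Y) : Prop :=
  forall U, opn Y U -> opn X (fun x => U (f x)).

Definition homeomorphism {X Y : space} (f : X -> Y) : Prop :=
  continuous f /\
  exists g : Y -> X, continuous g /\ (forall x, g (f x) = x) /\ (forall y, f (g y) = y).

(* Product (Tychonoff) topology on forall i, X i: U is open iff every point
   of U has a basic neighbourhood (finite intersection of preimages of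
   open sets under projections) contained in U. *)
Definition prod_opn (I : Type) (X : I -> space) (U : (forall i, X i) -> Prop) : Prop :=
  forall x, U x -> exists l : list {i : I & X i -> Prop},
    (forall p, In p l -> opn (X (projT1 p)) (projT2 p) /\ projT2 p (x (projT1 p))) /\
    (forall y, (forall p, In p l -> projT2 p (y (projT1 p))) -> U y).

Lemma prod_opn_top (I : Type) (X : I -> space) : is_topology (@prod_opn I X).
Proof.
split; [|split].
- intros x _. exists nil. split; [intros p []|intros; exact Logic.I].
- intros U V HU HV x [Ux Vx].
  destruct (HU x Ux) as [l1 [H1 K1]]. destruct (HV x Vx) as [l2 [H2 K2]].
  exists (l1 ++ l2). split.
  + intros p Hp. apply in_app_or in Hp. destruct Hp; auto.
  + intros y Hy. split.
    * apply K1. intros p Hp. apply Hy. apply in_or_app. auto.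
    * apply K2. intros p Hp. apply Hy. apply in_or_app. auto.
- intros F HF x [U [FU Ux]].
  destruct (HF U FU x Ux) as [l [H K]]. exists l. split; auto.
  intros y Hy. exists U. split; auto.
Qed.

Definition prod_space (I : Type) (X : I -> space) : space :=
  @Space (forall i, X i) (@prod_opn I X) (@prod_opn_top I X).

Definition sub_opn (X : space) (A : X -> Prop) (U : {x : X | A x} -> Prop) : Prop :=
  exists V, opn X V /\ forall y, U y <-> V (proj1_sig y).

Lemma sub_opn_top (X : space) (A : X -> Prop) : is_topology (@sub_opn X A).
Proof.
destruct (opn_top X) as [T1 [T2 T3]].
split; [|split].
- exists (fun _ => True). split; [exact T1|]. intros; tauto.
- intros U V [U' [HU' EU]] [V' [HV' EV]]. exists (fun x => U' x /\ V' x).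
  split; [auto|]. intros y. rewrite EU, EV. tauto.
- intros F HF.
  exists (fun x => exists W, (exists U, F U /\ opn X W /\ forall y, U y <-> W (proj1_sig y)) /\ W x).
  split.
  + apply T3. intros W [U [_ [HW _]]]. exact HW.
  + intros y. split.
    * intros [U [FU Uy]]. destruct (HF U FU) as [W [HW EW]].
      exists W. split; [exists U; auto|]. apply EW; exact Uy.
    * intros [W [[U [FU [_ EW]]] Wy]]. exists U. split; [exact FU|]. apply EW; exact Wy.
Qed.

Definition sub_space (X : space) (A : X -> Prop) : space :=
  @Space {x : X | A x} (@sub_opn X A) (@sub_opn_top X A).

(* Epireflective subcategory of Top (as in the paper): a full,
   isomorphism-closed subcategory (a class of spaces) closed under
   products and subspaces. Fullness is automatic for a class of spaces. *)
Definition iso_closed (C : space -> Prop) : Prop :=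
  forall X Y : space, C X -> (exists f : X -> Y, homeomorphism f) -> C Y.

Definition closed_under_products (C : space -> Prop) : Prop :=
  forall (I : Type) (X : I -> space), (forall i, C (X i)) -> C (@prod_space I X).

Definition closed_under_subspaces (C : space -> Prop) : Prop :=
  forall (X : space) (A : X -> Prop), C X -> C (@sub_space X A).

Definition epireflective (C : space -> Prop) : Prop :=
  iso_closed C /\ closed_under_products C /\ closed_under_subspaces C.

Definition closed_under_finer (C : space -> Prop) : Prop :=
  forall X : space, C X ->
  forall (rho : (X -> Prop) -> Prop) (hrho : is_topology rho),
    (forall U, opn X U -> rho U) -> C (@Space (pt X) rho hrho).

Definition is_reflection (C : space -> Prop) (X R : space) (q : X -> R) : Prop :=
  C R /\ continuous q /\ (forall r : R, exists x : X, q x = r) /\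
  forall (Z : space), C Z -> forall f : X -> Z, continuous f ->
    exists! g : R -> Z, continuous g /\ forall x, g (q x) = f x.

Definition semitop_maltsev (X : space) : Prop :=
  exists Phi : X -> X -> X -> X,
    (forall a b : X, continuous (fun x : X => (Phi x a b : X))) /\
    (forall a b : X, continuous (fun y : X => (Phi a y b : X))) /\
    (forall a b : X, continuous (fun z : X => (Phi a b z : X))) /\
    (forall x y : X, Phi x x y = y /\ Phi y x x = y).

From Stdlib Require Import List Classical ClassicalEpsilon ChoiceFacts.
From Stdlib Require Import FunctionalExtensionality PropExtensionality Eqdep FinFun.

(* Since C is closed under finer topologies, a reflection q : X -> r X is a
   quotient map: the quotient topology on r X is finer, hence in C, and the
   universal property makes the identity continuous.  A separately continuous
   Mal'tsev operation then makes q open: if q t = q u with u in an open U, the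
   map s |-> Phi(s,t,u) sends a neighbourhood of t into U, and
   q(Phi(s,t,u)) = q(Phi(s,t,t)) = q s.  Products of open surjections are
   open, so prod q is open, and mu is open because mu o q_P = prod q.
   For injectivity, moving one coordinate of x inside a fibre of q_j does not
   change q_P x (again by the universal property of q_j), hence neither do
   finitely many such moves; as open sets see only finitely many coordinates,
   points of a fibre of prod q have topologically indistinguishable images.
   Two distinct indistinguishable points in a space of C would make every map
   into them continuous, forcing every reflection to be injective; so the
   images coincide anyway. *)

Lemma opn_ext {X : space} {U V : X -> Prop} :
  (forall x, U x <-> V x) -> opn X U -> opn X V.
Proof.
intros H HU. replace V with U; [exact HU|].
apply functional_extensionality; intro x; apply propositional_extensionality, H.
Qed.

Lemma opn_full (X : space) : opn X (fun _ => True).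
Proof. apply (opn_top X). Qed.

Lemma opn_inter {X : space} (U V : X -> Prop) :
  opn X U -> opn X V -> opn X (fun x => U x /\ V x).
Proof. apply (opn_top X). Qed.

Lemma opn_union {X : space} (F : (X -> Prop) -> Prop) :
  (forall U, F U -> opn X U) -> opn X (fun x => exists U, F U /\ U x).
Proof. apply (opn_top X). Qed.

Lemma opn_const (X : space) (P : Prop) : opn X (fun _ => P).
Proof.
destruct (classic P) as [HP|HP].
- apply (opn_ext (U := fun _ => True)); [tauto|apply opn_full].
- apply (opn_ext (U := fun x => exists U, (fun _ : X -> Prop => False) U /\ U x)).
  + intros x; split; [intros [U [[] _]]|contradiction].
  + apply opn_union; intros U [].
Qed.

Lemma opn_of_nbhds {X : space} (S : X -> Prop) :
  (forall x, S x -> exists W, opn X W /\ W x /\ forall y, W y -> S y) -> opn X S.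
Proof.
intros H.
apply (opn_ext (U := fun x => exists W, (opn X W /\ forall y, W y -> S y) /\ W x)).
- intros x; split.
  + intros [W [[_ HWS] Wx]]; auto.
  + intros Sx; destruct (H x Sx) as [W [HW [Wx HWS]]]; eauto.
- apply opn_union; intros W [HW _]; exact HW.
Qed.

Lemma opn_list_inter {X : space} {A : Type} (l : list A) (P : A -> X -> Prop) :
  (forall a, In a l -> opn X (P a)) -> opn X (fun x => forall a, In a l -> P a x).
Proof.
induction l as [|a l IH]; intros H.
- apply (opn_ext (U := fun _ => True)); [|apply opn_full].
  intros x; split; [intros _ a []|auto].
- apply (opn_ext (U := fun x => P a x /\ forall b, In b l -> P b x)).
  + intros x; split.
    * intros [Ha Hl] b [<-|Hb]; auto.
    * intros Hx; split; [apply Hx; left; reflexivity|intros b Hb; apply Hx; right; exact Hb].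
  + apply opn_inter; [apply H; left; reflexivity|].
    apply IH; intros b Hb; apply H; right; exact Hb.
Qed.

Lemma continuous_comp {X Y Z : space} (f : X -> Y) (g : Y -> Z) :
  continuous f -> continuous g -> continuous (fun x => g (f x)).
Proof. intros Hf Hg U HU; exact (Hf _ (Hg U HU)). Qed.

Lemma continuous_id {X : space} : continuous (fun x : X => x).
Proof. intros U HU; exact HU. Qed.

Lemma continuous_const {X Y : space} (c : Y) : continuous (fun _ : X => c).
Proof. intros U _; apply opn_const. Qed.

Lemma continuous_into_prod {Y : space} {I : Type} {X : I -> space}
  (f : Y -> prod_space X) :
  (forall i, continuous (fun y => f y i)) -> continuous f.
Proof.
intros Hf U HU. apply opn_of_nbhds. intros y Uy.
destruct (HU (f y) Uy) as [l [Hl HlU]].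
exists (fun y' => forall p, In p l -> projT2 p (f y' (projT1 p))). split; [|split].
- apply opn_list_inter. intros p Hp. apply (Hf (projT1 p)), Hl, Hp.
- intros p Hp; apply Hl, Hp.
- intros y' Hy'; apply HlU, Hy'.
Qed.

Definition image {A B : Type} (f : A -> B) (U : A -> Prop) : B -> Prop :=
  fun y => exists x, U x /\ f x = y.

Definition open_map {X Y : space} (f : X -> Y) : Prop :=
  forall U, opn X U -> opn Y (image f U).

Lemma open_map_of_comp_surjective {X Y Z : space} (p : X -> Y) (g : Y -> Z) :
  continuous p -> Surjective p -> open_map (fun x => g (p x)) -> open_map g.
Proof.
intros Hp Hsurj Hgp V HV.
apply (opn_ext (U := image (fun x => g (p x)) (fun x => V (p x)))).
- intros z; split.
  + intros [x [Vpx <-]]; exists (p x); auto.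
  + intros [y [Vy <-]]. destruct (Hsurj y) as [x <-]. exists x; auto.
- apply Hgp, Hp, HV.
Qed.

Lemma homeomorphism_of_open_bijection {X Y : space} (f : X -> Y) :
  continuous f -> Injective f -> Surjective f -> open_map f -> homeomorphism f.
Proof.
intros Hf Hinj Hsurj Hopen. split; [exact Hf|].
destruct (choice (fun y x => f x = y) Hsurj) as [g Hg].
assert (Hgf : forall x, g (f x) = x) by (intro x; apply Hinj, Hg).
exists g. split; [|split; assumption].
intros U HU. apply (opn_ext (U := image f U)); [|apply Hopen, HU].
intros y; split.
- intros [x [Ux <-]]; rewrite Hgf; exact Ux.
- intros Ugy; exists (g y); auto.
Qed.

Definition indistinguishable {Z : space} (a b : Z) : Prop :=
  forall V, opn Z V -> (V a <-> V b).

Lemma final_topology_is_topology {X : space} {T : Type} (f : X -> T) :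
  is_topology (fun V : T -> Prop => opn X (fun x => V (f x))).
Proof.
split; [|split].
- apply opn_full.
- intros U V; apply opn_inter.
- intros F HF.
  apply (opn_ext (U := fun x => exists W, (exists V, F V /\ forall y, W y <-> V (f y)) /\ W x)).
  + intros x; split.
    * intros [W [[V [FV HWV]] Wx]]. exists V; split; [exact FV|apply HWV, Wx].
    * intros [V [FV Vfx]]. exists (fun y => V (f y)).
      split; [exists V; split; [exact FV|tauto]|exact Vfx].
  + apply opn_union. intros W [V [FV HWV]].
    apply (opn_ext (U := fun y => V (f y))); [intro y; symmetry; apply HWV|apply HF, FV].
Qed.

Section Reflection.

Context {C : space -> Prop} {X R : space} {q : X -> R}.
Hypothesis Hq : is_reflection C X R q.

Lemma reflection_factor (Z : space) (f : X -> Z) :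
  C Z -> continuous f -> forall a b, q a = q b -> f a = f b.
Proof.
destruct Hq as [_ [_ [_ Huniv]]]. intros HZ Hf a b Hab.
destruct (Huniv Z HZ f Hf) as [g [[_ Hgq] _]].
rewrite <- (Hgq a), <- (Hgq b), Hab. reflexivity.
Qed.

Lemma reflection_injective_of_indistinguishable (Z : space) (a b : Z) :
  C Z -> a <> b -> indistinguishable a b -> Injective q.
Proof.
intros HZ Hab Hind u v Huv. apply NNPP; intro Hne.
pose (f := fun t : X => if excluded_middle_informative (t = u) then a else b).
assert (Hf : continuous f).
{ intros V HV. apply (opn_ext (U := fun _ => V a)); [|apply opn_const].
  intros t. unfold f. destruct (excluded_middle_informative (t = u)); [tauto|].
  apply Hind, HV. }
pose proof (reflection_factor Z f HZ Hf u v Huv) as Hfuv. unfold f in Hfuv.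
destruct (excluded_middle_informative (u = u)) as [_|]; [|congruence].
destruct (excluded_middle_informative (v = u)); congruence.
Qed.

Hypothesis Hfin : closed_under_finer C.

Lemma reflection_quotient (U : R -> Prop) : opn X (fun x => U (q x)) -> opn R U.
Proof.
destruct Hq as [HCR [Hqc [Hqs Huniv]]].
pose (Rq := Space (final_topology_is_topology q)).
assert (HCRq : C Rq) by (apply Hfin; [exact HCR|intros V HV; apply Hqc, HV]).
assert (Hq' : @continuous X Rq q) by (intros V HV; exact HV).
destruct (Huniv Rq HCRq q Hq') as [g [[Hg Hgq] _]].
assert (Hgid : forall r, g r = r) by (intro r; destruct (Hqs r) as [x <-]; apply Hgq).
intro HU. apply (opn_ext (U := fun r => U (g r))); [intro r; rewrite Hgid; tauto|].
apply Hg, HU.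
Qed.

Lemma reflection_open_of_maltsev : semitop_maltsev X -> open_map q.
Proof.
intros [Phi [Hc1 [_ [Hc3 Hmal]]]] U HU. pose proof Hq as [HCR [Hqc _]].
apply reflection_quotient, opn_of_nbhds. intros t [u [Uu Htu]].
exists (fun s => U (Phi s t u)). split; [|split].
- apply (Hc1 t u U HU).
- rewrite (proj1 (Hmal t u)); exact Uu.
- intros s Us. exists (Phi s t u). split; [exact Us|].
  rewrite (reflection_factor R (fun z => q (Phi s t z)) HCR
             (continuous_comp _ _ (Hc3 s t) Hqc) u t Htu).
  rewrite (proj2 (Hmal t s)). reflexivity.
Qed.

End Reflection.

Section ProductOpenMap.

Context {I : Type} {X : I -> space}.

Definition box_at (l : list {i : I & X i -> Prop}) (i : I) (t : X i) : Prop :=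
  forall A, In (existT _ i A) l -> A t.

Lemma box_at_opn (l : list {i : I & X i -> Prop}) :
  (forall p, In p l -> opn (X (projT1 p)) (projT2 p)) -> forall i, opn (X i) (box_at l i).
Proof.
induction l as [|[k A0] l IH]; intros Hl i.
- apply (opn_ext (U := fun _ => True)); [|apply opn_full].
  intros t; split; [intros _ A []|auto].
- assert (Hbox : opn (X i) (box_at l i)).
  { apply IH; intros p Hp; apply Hl; right; exact Hp. }
  destruct (classic (k = i)) as [<-|Hki].
  + apply (opn_ext (U := fun t => A0 t /\ box_at l k t)).
    * intros t; split.
      -- intros [HA0 Ht] A [HA|HA]; [|exact (Ht A HA)].
         apply inj_pair2 in HA. subst; exact HA0.
      -- intros Ht; split; [apply Ht; left; reflexivity|intros A HA; apply Ht; right; exact HA].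
    * apply opn_inter; [apply (Hl (existT _ k A0)); left; reflexivity|exact Hbox].
  + apply (opn_ext (U := box_at l i)); [|exact Hbox].
    intros t; split.
    * intros Ht A [HA|HA]; [exfalso; apply Hki, (f_equal (@projT1 _ _) HA)|exact (Ht A HA)].
    * intros Ht A HA; apply Ht; right; exact HA.
Qed.

Lemma box_at_all (l : list {i : I & X i -> Prop}) (x : prod_space X) :
  (forall i, box_at l i (x i)) -> forall p, In p l -> projT2 p (x (projT1 p)).
Proof. intros Hx [i A] Hp; exact (Hx i A Hp). Qed.

Definition prod_map {Y : I -> space} (f : forall i, X i -> Y i) (x : prod_space X) :
  prod_space Y := fun i => f i (x i).

Lemma prod_map_open {Y : I -> space} (f : forall i, X i -> Y i) :
  (forall i, open_map (f i)) -> (forall i, Surjective (f i)) -> open_map (prod_map f).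
Proof.
intros Hopen Hsurj W HW y [w [Ww <-]].
destruct (HW w Ww) as [l [Hl HlW]].
exists (map (fun p => existT (fun i => Y i -> Prop) (projT1 p)
                (image (f (projT1 p)) (box_at l (projT1 p)))) l).
split.
- intros p' Hp'. apply in_map_iff in Hp'. destruct Hp' as [p [<- Hp]]. split.
  + apply Hopen, box_at_opn. intros p'' Hp''; apply Hl, Hp''.
  + exists (w (projT1 p)). split; [|reflexivity].
    intros A HA. exact (proj2 (Hl _ HA)).
- intros y' Hy'.
  assert (Hfibre : forall i, exists t, box_at l i t /\ f i t = y' i).
  { intro i. destruct (classic (exists A, In (existT _ i A) l)) as [[A HA]|Hno].
    - apply (Hy' (existT (fun i => Y i -> Prop) i (image (f i) (box_at l i)))).
      apply in_map_iff. exists (existT _ i A); auto.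
    - destruct (Hsurj i (y' i)) as [t Ht]. exists t; split; [|exact Ht].
      intros A HA; exfalso; eauto. }
  destruct (non_dep_dep_functional_choice choice _ _ Hfibre) as [w' Hw'].
  exists w'. split.
  + apply HlW, box_at_all. intro i; apply Hw'.
  + apply functional_extensionality_dep; intro i; apply Hw'.
Qed.

End ProductOpenMap.

Definition update {I : Type} {T : I -> Type} (x : forall i, T i) (j : I) (t : T j) :
  forall i, T i :=
  fun i => match excluded_middle_informative (j = i) with
           | left e => eq_rect j T t i e
           | right _ => x i
           end.

Lemma update_at {I : Type} {T : I -> Type} (x : forall i, T i) (j : I) (t : T j) :
  update x j t j = t.
Proof.
unfold update. destruct (excluded_middle_informative (j = j)) as [e|]; [|congruence].
rewrite <- (eq_rect_eq _ _ _ t e). reflexivity.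
Qed.

Lemma update_off {I : Type} {T : I -> Type} (x : forall i, T i) (j i : I) (t : T j) :
  j <> i -> update x j t i = x i.
Proof. unfold update. destruct (excluded_middle_informative (j = i)); congruence. Qed.

Lemma update_id {I : Type} {T : I -> Type} (x : forall i, T i) (j : I) :
  update x j (x j) = x.
Proof.
apply functional_extensionality_dep; intro i.
destruct (classic (j = i)) as [<-|Hji]; [apply update_at|apply update_off, Hji].
Qed.

Lemma continuous_update {I : Type} {X : I -> space} (x : prod_space X) (j : I) :
  @continuous (X j) (prod_space X) (update x j).
Proof.
apply continuous_into_prod. intro i. unfold update.
destruct (excluded_middle_informative (j = i)) as [<-|]; cbn;
  [apply continuous_id|apply continuous_const].
Qed.

Fixpoint patch {I : Type} {T : I -> Type} (x y : forall i, T i) (L : list I) :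
  forall i, T i :=
  match L with
  | nil => x
  | j :: L => update (patch x y L) j (y j)
  end.

Lemma patch_in {I : Type} {T : I -> Type} (x y : forall i, T i) (L : list I) (i : I) :
  In i L -> patch x y L i = y i.
Proof.
induction L as [|j L IH]; [intros []|intros HiL; cbn].
destruct (classic (j = i)) as [<-|Hji]; [apply update_at|].
rewrite update_off by exact Hji. apply IH. destruct HiL; [contradiction|assumption].
Qed.

Lemma patch_cases {I : Type} {T : I -> Type} (x y : forall i, T i) (L : list I) (i : I) :
  patch x y L i = x i \/ patch x y L i = y i.
Proof.
induction L as [|j L IH]; cbn; [left; reflexivity|].
destruct (classic (j = i)) as [<-|Hji]; [right; apply update_at|].
rewrite update_off by exact Hji. exact IH.
Qed.

Section ProductReflection.

Context {C : space -> Prop} {I : Type} {X R : I -> space} {q : forall i, X i -> R i}.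
Hypothesis Hq : forall i, is_reflection C (X i) (R i) (q i).
Context {RP : space} {qP : prod_space X -> RP}.
Hypothesis HqP : is_reflection C (prod_space X) RP qP.

Lemma reflection_update_fibre (x : prod_space X) (j : I) (t : X j) :
  q j t = q j (x j) -> qP (update x j t) = qP x.
Proof.
pose proof HqP as [HCRP [HqPc _]]. intro Ht.
rewrite <- (update_id x j) at 2.
apply (reflection_factor (Hq j) RP (fun t => qP (update x j t))); [exact HCRP| |exact Ht].
apply continuous_comp; [apply continuous_update|exact HqPc].
Qed.

Lemma reflection_patch_fibre (x y : prod_space X) (L : list I) :
  (forall i, q i (x i) = q i (y i)) -> qP (patch x y L) = qP x.
Proof.
intros Hxy. induction L as [|j L IH]; [reflexivity|cbn].
rewrite reflection_update_fibre; [exact IH|].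
destruct (patch_cases x y L j) as [-> | ->]; [symmetry; apply Hxy|reflexivity].
Qed.

Lemma reflection_fibre_indistinguishable (x y : prod_space X) :
  (forall i, q i (x i) = q i (y i)) -> indistinguishable (qP x) (qP y).
Proof.
pose proof HqP as [_ [HqPc _]].
assert (Hhalf : forall x y V, (forall i, q i (x i) = q i (y i)) ->
                  opn RP V -> V (qP y) -> V (qP x)).
{ clear x y. intros x y V Hxy HV Vy.
  destruct (HqPc V HV y Vy) as [l [Hl HlV]].
  rewrite <- (reflection_patch_fibre x y (map (@projT1 _ _) l) Hxy). apply HlV.
  intros p Hp. rewrite patch_in; [apply Hl, Hp|apply in_map, Hp]. }
intros Hxy V HV; split; apply Hhalf; trivial.
intro i; symmetry; apply Hxy.
Qed.

Lemma reflection_prod_fibre (x y : prod_space X) :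
  (forall i, q i (x i) = q i (y i)) -> qP x = qP y.
Proof.
intros Hxy. apply NNPP; intro Hne. pose proof HqP as [HCRP _].
apply Hne. f_equal. apply functional_extensionality_dep; intro i.
apply (reflection_injective_of_indistinguishable (Hq i) RP (qP x) (qP y) HCRP Hne).
- apply reflection_fibre_indistinguishable, Hxy.
- apply Hxy.
Qed.

End ProductReflection.

Theorem theorem4p9
  (C : space -> Prop) (HC : epireflective C) (Hfin : closed_under_finer C)
  (I : Type) (X : I -> space) (HX : forall i, semitop_maltsev (X i))
  (R : I -> space) (q : forall i, X i -> R i)
  (Hq : forall i, is_reflection C (X i) (R i) (q i))
  (RP : space) (qP : prod_space X -> RP)
  (HqP : is_reflection C (prod_space X) RP qP)
  (mu : RP -> prod_space R) (Hmu_cont : continuous mu)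
  (Hmu : forall (x : prod_space X) (j : I), mu (qP x) j = q j (x j)) :
  homeomorphism mu.
Proof.
pose proof HqP as [_ [HqPc [HqPs _]]].
assert (Hqs : forall i, Surjective (q i)) by (intro i; destruct (Hq i) as [_ [_ [Hs _]]]; exact Hs).
assert (Hmu_qP : (fun x => mu (qP x)) = prod_map q).
{ apply functional_extensionality; intro x; apply functional_extensionality_dep, Hmu. }
apply homeomorphism_of_open_bijection; [exact Hmu_cont| | |].
- intros a b Hab. destruct (HqPs a) as [x <-], (HqPs b) as [y <-].
  apply (reflection_prod_fibre Hq HqP). intro i.
  rewrite <- (Hmu x i), <- (Hmu y i), Hab. reflexivity.
- intro r. destruct (non_dep_dep_functional_choice choice _ _ (fun i => Hqs i (r i)))
    as [x Hx].
  exists (qP x). apply functional_extensionality_dep; intro i. rewrite Hmu. apply Hx.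
- apply (open_map_of_comp_surjective qP mu HqPc HqPs). rewrite Hmu_qP.
  apply prod_map_open; [|exact Hqs].
  intro i; apply (reflection_open_of_maltsev (Hq i) Hfin (HX i)).
Qed.
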